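(* Let $\mathcal A\colon\bigcup_{n,m\ge1}Z^{(n,m)}\to\mathcal F$ be any representation learner and $\alpha>0$, $\nu>0$. Then, with $(\mathbf z,\vec P)$ generated by the $(n,m)$-sampling process from the environment $Q$, $$\Pr\left\{(\mathbf z,\vec P):d_\nu\big(E^*_{\mathcal G}(\mathcal A(\mathbf z),\mathbf z),E^*_{\mathcal G}(\mathcal A(\mathbf z),\vec P)\big)>\alpha\right\}\le\Pr\left\{(\mathbf z,\vec P):\exists\,\vec g\in\mathcal G^n,f\in\mathcal F,\ d_\nu\big(E(\vec g\circ\bar f,\mathbf z),E(\vec g\circ\bar f,\vec P)\big)>\alpha\right\}.$$
   Context: $X,Y,A,V$ sets, $Z=X\times Y$, $\mathcal F$ maps $X\to V$, $\mathcal G$ maps $V\to A$, $l\colon Y\times A\to[0,M]$, $l_{g\circ f}(x,y)=l(y,g(f(x)))$. $Q$ is a probability measure on a set $\mathbb P$ of probability measures on $Z$ (with respect to which all $l_{g\circ f}$ are measurable). $(n,m)$-sampling: draw $\vec P=(P_1,\dots,P_n)$ independently according to $Q$, then for each $i$ draw $z_{i1},\dots,z_{im}$ independently from $P_i$, forming $\mathbf z=(z_{ij})\in Z^{(n,m)}$. $E^*_{\mathcal G}(f,\mathbf z)=\frac1n\sum_i\inf_{g\in\mathcal G}\frac1m\sum_j l_{g\circ f}(z_{ij})$; $E^*_{\mathcal G}(f,\vec P)=\frac1n\sum_i\inf_{g\in\mathcal G}\int l_{g\circ f}dP_i$. For $\vec g=(g_1,\dots,g_n)\in\mathcal G^n$: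 $E(\vec g\circ\bar f,\mathbf z)=\frac1{nm}\sum_{i,j}l_{g_i\circ f}(z_{ij})$, $E(\vec g\circ\bar f,\vec P)=\frac1n\sum_i\int l_{g_i\circ f}dP_i$. $d_\nu(x,y)=\frac{|x-y|}{\nu+x+y}$. All events are assumed measurable. *)

From HB Require Import structures.
From mathcomp Require Import all_boot all_order all_algebra.
From mathcomp Require Import all_classical all_reals all_analysis.
Set Implicit Arguments. Unset Strict Implicit. Unset Printing Implicit Defensive.
Import Order.TTheory GRing.Theory Num.Theory.
Local Open Scope classical_set_scope.
Local Open Scope ring_scope.

Definition vnil (T : Type) : 'I_0 -> T :=
  fun i => False_rect T (@eq_ind bool false (fun b => if b then False else True) I true (ltn_ord i)).

Definition vcons (T : Type) (n : nat) (t : T) (v : 'I_n -> T) : 'I_n.+1 -> T :=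
  fun i => match unlift ord0 i with Some j => v j | None => t end.

(* Iterated integral over n coordinates: coordinate i (outermost first) is
   integrated by the integration functional I i. *)
Fixpoint iter_int (R : realType) (T : Type) (n : nat) :
  ('I_n -> (T -> \bar R) -> \bar R) -> (('I_n -> T) -> \bar R) -> \bar R :=
  match n with
  | 0 => fun _ h => h (@vnil T)
  | n'.+1 => fun I h =>
      I ord0 (fun t => @iter_int R T n' (fun j => I (lift ord0 j))
                                    (fun v => h (vcons t v)))
  end.

Section Baxter.
Context (R : realType) (dX dY : measure_display)
        (X : measurableType dX) (Y : measurableType dY) (V A : Type).

Local Notation Z := (X * Y)%type.
Local Notation PZ := (pprobability Z R).

Definition lgf (l : Y -> A -> R) (g : V -> A) (f : X -> V) : Z -> R :=
  fun z => l z.2 (g (f z.1)).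

Definition d_nu (nu x y : R) : R := `|x - y| / (nu + x + y).

Definition Estar_emp (l : Y -> A -> R) (G : set (V -> A)) (n m : nat)
    (f : X -> V) (z : 'I_n -> 'I_m -> Z) : R :=
  n%:R^-1 * \sum_(i < n)
    inf [set (m%:R^-1 * \sum_(j < m) lgf l g f (z i j)) | g in G].

Definition Estar_true (l : Y -> A -> R) (G : set (V -> A)) (n : nat)
    (f : X -> V) (P : 'I_n -> PZ) : R :=
  n%:R^-1 * \sum_(i < n)
    inf [set Rintegral (P i : probability Z R) setT (lgf l g f) | g in G].

Definition E_emp (l : Y -> A -> R) (n m : nat) (gv : 'I_n -> V -> A)
    (f : X -> V) (z : 'I_n -> 'I_m -> Z) : R :=
  (n * m)%:R^-1 * \sum_(i < n) \sum_(j < m) lgf l (gv i) f (z i j).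

Definition E_true (l : Y -> A -> R) (n : nat) (gv : 'I_n -> V -> A)
    (f : X -> V) (P : 'I_n -> PZ) : R :=
  n%:R^-1 * \sum_(i < n) Rintegral (P i : probability Z R) setT (lgf l (gv i) f).

(* Probability of an event S about (z, P) under the (n,m)-sampling process:
   P_1, ..., P_n drawn independently from Q, then, given P, for each i the
   points z_i1, ..., z_im drawn independently from P_i.  Written as the
   iterated integral of the indicator of S in exactly this order. *)
Definition sample_prob (Q : probability PZ R) (n m : nat)
    (S : set (('I_n -> 'I_m -> Z) * ('I_n -> PZ))) : \bar R :=
  @iter_int R PZ n (fun _ (h : PZ -> \bar R) => (\int[Q]_p h p)%E)
    (fun P : 'I_n -> PZ =>
       @iter_int R ('I_m -> Z) n
         (fun i (h : ('I_m -> Z) -> \bar R) =>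
            @iter_int R Z m (fun _ (k : Z -> \bar R) =>
                          (\int[(P i : probability Z R)]_x k x)%E) h)
         (fun z : 'I_n -> 'I_m -> Z => (\1_S (z, P))%:E)).

End Baxter.
Arguments sample_prob {R dX dY X Y} Q n m S.

(* The event on the left is contained in the event on the right, sample by
   sample.  Fix (z, P) and put f := A(z), x := E*(f, z), y := E*(f, P).  If
   x <= y, choose each g_i within eps of the infimum defining x; then
   E(g o f, z) < x + eps while E(g o f, P) >= y.  For x <= y the distance
   d_nu(x, y) = (y - x) / (nu + x + y) decreases in x and increases in y, so
   the strict inequality alpha < d_nu(x, y) survives for eps small enough; the
   case y <= x is symmetric.  The sampling probability is an iterated integral
   of the indicator of the event, and integrals of nonnegative functions are
   monotone even without measurability, so the inclusion of events gives the
   inequality of probabilities. *)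
From HB Require Import structures.
From mathcomp Require Import all_boot all_order all_algebra.
From mathcomp Require Import all_classical all_reals all_analysis.
From mathcomp Require Import ring lra.
Set Implicit Arguments. Unset Strict Implicit. Unset Printing Implicit Defensive.
Import Order.TTheory GRing.Theory Num.Theory.
Local Open Scope classical_set_scope.
Local Open Scope ring_scope.

Section distance.
Variable R : realType.

Lemma d_nuC (nu x y : R) : d_nu nu x y = d_nu nu y x.
Proof. by rewrite /d_nu distrC -addrA (addrC x) addrA. Qed.

Lemma d_nu_gt_perturb (nu alpha x y : R) :
  0 < nu -> 0 <= alpha -> 0 <= x -> x <= y -> alpha < d_nu nu x y ->
  exists2 eps, 0 < eps & forall x' y', 0 <= x' -> x' < x + eps -> y <= y' ->
    alpha < d_nu nu x' y'.
Proof.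
move=> nu0 alpha0 x0 xy; rewrite /d_nu.
have den : 0 < nu + x + y by lra.
rewrite ltr_pdivlMr // distrC ger0_norm ?subr_ge0 // => gap.
have alpha1 : alpha < 1 by nra.
(* Half the slack in y - x > alpha (nu + x + y), which shrinks at rate
   1 + alpha as x grows. *)
exists ((y - x - alpha * (nu + x + y)) / (2 * (1 + alpha))).
  by apply: divr_gt0; lra.
set e := _ / _ => x' y' x'0 x'x yy'.
have he : (1 + alpha) * e * 2 = y - x - alpha * (nu + x + y).
  by rewrite /e; field; lra.
have den' : 0 < nu + x' + y' by lra.
rewrite ltr_pdivlMr // distrC; apply: lt_le_trans (ler_norm _).
have : 0 <= (1 - alpha) * (y' - y) by apply: mulr_ge0; lra.
have : (1 + alpha) * (x' - x) < (1 + alpha) * e by rewrite ltr_pM2l; lra.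
nra.
Qed.

End distance.

Section average.
Variable R : realType.

Definition avg (n : nat) (u : 'I_n -> R) : R := n%:R^-1 * \sum_(i < n) u i.

Lemma avg_ge0 n (u : 'I_n -> R) : (forall i, 0 <= u i) -> 0 <= avg u.
Proof. by move=> u0; rewrite mulr_ge0 ?invr_ge0 ?ler0n ?sumr_ge0. Qed.

Lemma ler_avg n (u v : 'I_n -> R) : (forall i, u i <= v i) -> avg u <= avg v.
Proof. by move=> uv; rewrite ler_wpM2l ?invr_ge0 ?ler0n ?ler_sum. Qed.

Lemma ltr_avg n (u v : 'I_n -> R) : (0 < n)%N ->
  (forall i, u i < v i) -> avg u < avg v.
Proof.
move=> n0 uv; rewrite ltr_pM2l ?invr_gt0 ?ltr0n //.
by apply: ltr_sum => //; apply/hasP; exists (Ordinal n0); rewrite ?mem_index_enum.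
Qed.

Lemma avgDr n (u : 'I_n -> R) (e : R) : (0 < n)%N ->
  avg (fun i => u i + e) = avg u + e.
Proof.
move=> n0; rewrite /avg big_split /= sumr_const card_ord mulrDr -[e *+ _]mulr_natr.
by rewrite mulrCA mulVf ?mulr1 // pnatr_eq0 -lt0n.
Qed.

Variables (B : Type) (G : set B) (n : nat).
Implicit Types c d : 'I_n -> B -> R.

Lemma avg_inf_le c (gv : 'I_n -> B) : (forall i g, 0 <= c i g) ->
  (forall i, G (gv i)) ->
  avg (fun i => inf [set c i g | g in G]) <= avg (fun i => c i (gv i)).
Proof.
move=> c0 Ggv; apply: ler_avg => i; apply: ge_inf; last by exists (gv i).
by exists 0 => _ [g _ <-].
Qed.

Lemma avg_inf_set0 c : ~ (exists g, G g) ->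
  avg (fun i => inf [set c i g | g in G]) = 0.
Proof.
move=> noG; have G0 : G = set0 by apply/seteqP; split => g // Gg; apply: noG; exists g.
by rewrite /avg big1 ?mulr0 // => i _; rewrite G0 image_set0 inf0.
Qed.

Lemma avg_inf_approx c (eps : R) : (0 < n)%N -> 0 < eps ->
  (exists g, G g) -> (forall i g, 0 <= c i g) ->
  exists2 gv : 'I_n -> B, forall i, G (gv i) &
    avg (fun i => c i (gv i)) < avg (fun i => inf [set c i g | g in G]) + eps.
Proof.
move=> n0 eps0 [g0 Gg0] c0.
have near_inf i : exists g, G g /\ c i g < inf [set c i g | g in G] + eps.
  have c_has_inf : has_inf [set c i g | g in G].
    by split; [exists (c i g0), g0 | exists 0 => _ [g _ <-]].
  by have [_ [g Gg <-] ?] := inf_adherent eps0 c_has_inf; exists g.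
have [gv Ggv] := choice near_inf.
exists gv; first by move=> i; case: (Ggv i).
by rewrite -avgDr //; apply: ltr_avg => // i; case: (Ggv i).
Qed.

Lemma avg_inf_gap_witness c d (nu alpha : R) : (0 < n)%N ->
  0 < nu -> 0 < alpha -> (forall i g, 0 <= c i g) -> (forall i g, 0 <= d i g) ->
  alpha < d_nu nu (avg (fun i => inf [set c i g | g in G]))
                  (avg (fun i => inf [set d i g | g in G])) ->
  exists2 gv : 'I_n -> B, forall i, G (gv i) &
    alpha < d_nu nu (avg (fun i => c i (gv i))) (avg (fun i => d i (gv i))).
Proof.
move=> n0 nu0 alpha0 c0 d0 gap.
have [[g0 Gg0] | noG] := pselect (exists g, G g); last first.
  move: gap; rewrite !avg_inf_set0 // /d_nu subrr normr0 mul0r.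
  by move=> /(lt_trans alpha0); rewrite ltxx.
have inf_ge0 (e : 'I_n -> B -> R) : (forall i g, 0 <= e i g) ->
    0 <= avg (fun i => inf [set e i g | g in G]).
  move=> e0; apply: avg_ge0 => i; apply: lb_le_inf; first by exists (e i g0), g0.
  by move=> _ [g _ <-].
wlog le_cd : c d c0 d0 gap / avg (fun i => inf [set c i g | g in G]) <=
                            avg (fun i => inf [set d i g | g in G]).
  move=> main; have [|/ltW le_dc] := lerP (avg (fun i => inf [set c i g | g in G]))
                                         (avg (fun i => inf [set d i g | g in G])).
    exact: main.
  rewrite d_nuC in gap; have [gv Ggv] := main d c d0 c0 gap le_dc.
  by rewrite d_nuC; exists gv.
have [eps eps0 stable] :=
  d_nu_gt_perturb nu0 (ltW alpha0) (inf_ge0 c c0) le_cd gap.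
have [gv Ggv approx] := avg_inf_approx n0 eps0 (ex_intro _ g0 Gg0) c0.
exists gv => //; apply: stable => //; first exact: avg_ge0.
exact: avg_inf_le.
Qed.

End average.

Section gap_event.
Variables (R : realType) (dX dY : measure_display)
  (X : measurableType dX) (Y : measurableType dY) (V A : Type).
Variables (G : set (V -> A)) (l : Y -> A -> R).
Hypothesis l_ge0 : forall y a, 0 <= l y a.
Variables (n m : nat) (f : X -> V).
Variables (z : 'I_n -> 'I_m -> (X * Y)%type) (P : 'I_n -> pprobability (X * Y)%type R).

Let emp_risk i g := m%:R^-1 * \sum_(j < m) lgf l g f (z i j).
Let true_risk i g := Rintegral (P i : probability _ R) setT (lgf l g f).

Lemma E_empE gv : E_emp l gv f z = avg (fun i => emp_risk i (gv i)).
Proof. by rewrite /E_emp /avg natrM invfM -mulrA mulr_sumr. Qed.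

Lemma Estar_gap_witness (nu alpha : R) : (0 < n)%N -> 0 < nu -> 0 < alpha ->
  alpha < d_nu nu (Estar_emp l G f z) (Estar_true l G f P) ->
  exists2 gv : 'I_n -> V -> A, forall i, G (gv i) &
    alpha < d_nu nu (E_emp l gv f z) (E_true l gv f P).
Proof.
move=> n0 nu0 alpha0 gap.
have emp_ge0 i g : 0 <= emp_risk i g.
  by rewrite mulr_ge0 ?invr_ge0 ?ler0n ?sumr_ge0 // => j _; exact: l_ge0.
have true_ge0 i g : 0 <= true_risk i g.
  by apply: Rintegral_ge0 => x _; exact: l_ge0.
have [gv Ggv gap'] := avg_inf_gap_witness n0 nu0 alpha0 emp_ge0 true_ge0 gap.
by exists gv; rewrite // E_empE.
Qed.

End gap_event.

Section sampling_monotone.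
Local Open Scope ereal_scope.
Variable R : realType.

Definition nonneg_monotone (T : Type) (I : (T -> \bar R) -> \bar R) :=
  forall h1 h2, (forall t, 0 <= h1 t) -> (forall t, h1 t <= h2 t) ->
    0 <= I h1 <= I h2.

Lemma integral_nonneg_monotone d (T : measurableType d)
    (mu : {measure set T -> \bar R}) :
  nonneg_monotone (fun h => \int[mu]_x h x).
Proof.
move=> h1 h2 h10 h12; have h20 t := le_trans (h10 t) (h12 t).
rewrite integral_ge0 //= !ge0_integralTE //; apply: ereal_sup_le.
by move=> _ [s sh1 <-]; exists s => // t; exact: le_trans (sh1 t) (h12 t).
Qed.

Lemma iter_int_nonneg_monotone (T : Type) n (I : 'I_n -> (T -> \bar R) -> \bar R) :
  (forall i, nonneg_monotone (I i)) -> nonneg_monotone (iter_int I).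
Proof.
elim: n I => [|n IH] I Imono h1 h2 h10 h12 /=; first by rewrite h10 h12.
have inner t := IH _ (fun j => Imono (lift ord0 j))
  (fun v => h1 (vcons t v)) (fun v => h2 (vcons t v)) (fun v => h10 _) (fun v => h12 _).
by apply: Imono => t; case/andP: (inner t).
Qed.

Lemma le_sample_prob dX dY (X : measurableType dX) (Y : measurableType dY)
    (Q : probability (pprobability (X * Y)%type R) R) n m S1 S2 :
  S1 `<=` S2 -> sample_prob Q n m S1 <= sample_prob Q n m S2.
Proof.
move=> S12.
have indic_ge0 zP : 0 <= (\1_S1 zP : R)%:E by rewrite lee_fin indicE ler0n.
have indic_le zP : (\1_S1 zP : R)%:E <= (\1_S2 zP : R)%:E.
  rewrite lee_fin !indicE; have [/set_mem/S12 S2zP|] := boolP (zP \in S1).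
    by rewrite mem_set.
  by case: (_ \in S2).
have outer := iter_int_nonneg_monotone (n := n) (fun=> integral_nonneg_monotone Q).
have inner (P : 'I_n -> pprobability (X * Y)%type R) :=
  iter_int_nonneg_monotone (n := n) (fun i => iter_int_nonneg_monotone (n := m)
    (fun=> integral_nonneg_monotone (P i : probability _ R))).
rewrite /sample_prob; apply: (proj2 (andP (outer _ _ _ _))) => P;
  by case/andP: (inner P _ _ (fun z => indic_ge0 (z, P)) (fun z => indic_le (z, P))).
Qed.

End sampling_monotone.

Theorem lemma3p3 (R : realType) (dX dY : measure_display)
    (X : measurableType dX) (Y : measurableType dY) (V A : Type)
    (F : set (X -> V)) (G : set (V -> A))
    (l : Y -> A -> R) (M : R)
    (hl : forall y a, 0 <= l y a <= M)
    (hmeas : forall g f, G g -> F f -> measurable_fun setT (lgf l g f))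
    (Q : probability (pprobability (X * Y)%type R) R)
    (n m : nat) (hn : (0 < n)%N) (hm : (0 < m)%N)
    (Alg : ('I_n -> 'I_m -> (X * Y)%type) -> X -> V)
    (hAlg : forall z, F (Alg z))
    (alpha nu : R) (halpha : 0 < alpha) (hnu : 0 < nu) :
  (sample_prob Q n m
     [set zP | (alpha < d_nu nu (Estar_emp l G (Alg zP.1) zP.1)
                                (Estar_true l G (Alg zP.1) zP.2))%R]
   <= sample_prob Q n m
     [set zP | exists gv : 'I_n -> V -> A, exists f : X -> V,
                 (forall i, G (gv i)) /\ F f /\
                 (alpha < d_nu nu (E_emp l gv f zP.1) (E_true l gv f zP.2))%R])%E.
Proof.
have l_ge0 y a : 0 <= l y a by case/andP: (hl y a).
apply: le_sample_prob => -[z P] /= gap.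
have [gv Ggv gap'] := Estar_gap_witness l_ge0 hn hnu halpha gap.
by exists gv, (Alg z).
Qed.
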